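(* Let $n\ge2$ and let $g:\mathbb{R}\to(0,\infty)$ be a continuous, even, $2\pi/n$-periodic function that is nondecreasing on $[0,\pi/n]$, and let $D=\{re^{i\theta}:\theta\in[0,2\pi),\ 0\le r<g(\theta)\}$. For $\alpha\in\mathbb{R}$ let $S_\alpha$ denote the reflection across the line $\{re^{i\alpha}:r\in\mathbb{R}\}$, i.e. $S_\alpha(re^{i\theta})=re^{i(2\alpha-\theta)}$, and for $\alpha<\beta$ let $\sigma(\alpha,\beta)=\{re^{i\theta}: r>0,\ \alpha<\theta<\beta\}$. Then for every $t\in(0,\pi/n)$, $$S_{\frac{\pi}{n}+t}\Big(D\cap\sigma\big(\tfrac{\pi}{n}+t,\tfrac{2\pi}{n}+t\big)\Big)\subseteq D\cap\sigma\big(t,\tfrac{\pi}{n}+t\big).$$ Moreover, if $D$ is not a disk, then $$S_{\frac{\pi}{n}+t}\Big(\partial D\cap\sigma\big(\tfrac{\pi}{n}+t,\tfrac{2\pi}{n}+t\big)\Big)\cap D\neq\emptyset.$$ *)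

From HB Require Import structures.
From mathcomp Require Import all_boot all_order all_algebra.
From mathcomp Require Import all_classical all_reals all_analysis.
Set Implicit Arguments. Unset Strict Implicit. Unset Printing Implicit Defensive.
Import Order.TTheory GRing.Theory Num.Theory.
Import numFieldNormedType.Exports.
Local Open Scope classical_set_scope.
Local Open Scope ring_scope.

Definition polar (R : realType) (r th : R) : R * R := (r * cos th, r * sin th).

Definition starD (R : realType) (g : R -> R) : set (R * R) :=
  [set p | exists r th, [/\ 0 <= th < 2 * pi, 0 <= r < g th & p = polar r th]].

Definition sector (R : realType) (a b : R) : set (R * R) :=
  [set p | exists r th, [/\ 0 < r, a < th < b & p = polar r th]].

(* reflection across the line { r e^{i a} : r in R }:
   S_a(r e^{i theta}) = r e^{i (2a - theta)} *)
Definition refl (R : realType) (a : R) (p : R * R) : R * R :=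
  (cos (2 * a) * p.1 + sin (2 * a) * p.2, sin (2 * a) * p.1 - cos (2 * a) * p.2).

Definition bdry (R : realType) (A : set (R * R)) : set (R * R) :=
  closure A `\` interior A.

Definition disk (R : realType) (c : R * R) (rho : R) : set (R * R) :=
  [set p | (p.1 - c.1) ^+ 2 + (p.2 - c.2) ^+ 2 < rho ^+ 2].

From HB Require Import structures.
From mathcomp Require Import all_boot all_order all_algebra.
From mathcomp Require Import all_classical all_reals all_analysis.
From mathcomp Require Import ring lra.
Import Order.TTheory GRing.Theory Num.Theory.
Import numFieldNormedType.Exports.
Local Open Scope classical_set_scope.
Local Open Scope ring_scope.

(* Write h = pi / n.  The reflection across the ray of angle h + t sends the
   ray of angle th in (h + t, 2h + t) to the ray of angle 2(h + t) - th in
   (t, h + t), and since g is even, 2h-periodic and nondecreasing on [0, h],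
   g th <= g (2(h + t) - th): this is the inclusion.  If D is not a disk then
   g is not constant, so g 0 < g h.  With c the last point of [0, h] where g
   takes the value g 0, one of the angles th = 2h - c, 2h + c or h + 2t makes
   the inequality strict, and then the reflection of the boundary point
   g(th) e^(i th) lies in D. *)

Section PolarCoordinates.
Context {R : realType}.
Implicit Types r th a x : R.

Lemma refl_polar a r th : refl a (polar r th) = polar r (2 * a - th).
Proof. by rewrite /refl /polar /= cosB sinB; congr pair; ring. Qed.

Lemma polar_normsq r th : (polar r th).1 ^+ 2 + (polar r th).2 ^+ 2 = r ^+ 2.
Proof. by rewrite /polar /= !exprMn -mulrDr cos2Dsin2 mulr1. Qed.

Lemma cos_eq1_lt2pi x : - (2 * pi) < x < 2 * pi -> cos x = 1 -> x = 0.
Proof.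
move=> /andP[lox hix] cx1.
have cos_half : cos x = 1 - 2 * sin (x / 2) ^+ 2.
  have -> : cos x = cos (x / 2 *+ 2) by rewrite -mulr_natr divfK ?pnatr_eq0.
  by rewrite cos_mulr2n cos2sin2; ring.
have sin_half0 : sin (x / 2) = 0.
  by apply/eqP; rewrite -sqrf_eq0; apply/eqP; lra.
have pi_gt0 := @pi_gt0 R.
case: (ltrgt0P (x / 2)) => x2; last lra.
- have : 0 < sin (x / 2) by apply: sin_gt0_pi; lra.
  by rewrite sin_half0 ltxx.
- have : 0 < sin (- (x / 2)) by apply: sin_gt0_pi; lra.
  by rewrite sinN sin_half0 oppr0 ltxx.
Qed.

Lemma polar_inj {r r' th th'} : 0 < r -> 0 <= r' ->
  0 <= th < 2 * pi -> 0 <= th' < 2 * pi ->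
  polar r th = polar r' th' -> r = r' /\ th = th'.
Proof.
move=> r_gt0 r'_ge0 th_itv th'_itv E.
have r_eq : r = r'.
  apply/eqP; rewrite -(eqrXn2 (n := 2) _ (ltW r_gt0) r'_ge0) //.
  by rewrite -(polar_normsq r th) E polar_normsq.
subst r'; move: E => [/(mulfI (lt0r_neq0 r_gt0)) cos_eq].
move=> /(mulfI (lt0r_neq0 r_gt0)) sin_eq.
split=> //; apply/eqP; rewrite -subr_eq0; apply/eqP/cos_eq1_lt2pi; first lra.
by rewrite cosB cos_eq sin_eq -!expr2 cos2Dsin2.
Qed.

Lemma polarP (p : R * R) :
  exists r th, [/\ 0 <= r, 0 <= th < 2 * pi & p = polar r th].
Proof.
case: p => x y; set s := x ^+ 2 + y ^+ 2.
have [s0|s_neq0] := eqVneq s 0.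
  exists 0, 0; rewrite /polar !mul0r; split => //; first by have := @pi_gt0 R; lra.
  by congr pair; apply/eqP; rewrite -sqrf_eq0; apply/eqP; rewrite /s in s0; nra.
have s_gt0 : 0 < s by rewrite lt_neqAle eq_sym s_neq0 /s; nra.
set r := Num.sqrt s.
have r_gt0 : 0 < r by rewrite sqrtr_gt0.
have r2 : r ^+ 2 = s by rewrite sqr_sqrtr ?ltW.
set u := x / r.
have x_eq : x = r * u by rewrite /u mulrC divfK ?gt_eqF.
have u_itv : -1 <= u <= 1.
  suff : u ^+ 2 <= 1 by nra.
  by rewrite expr_div_n r2 ler_pdivrMr // mul1r /s; nra.
set th := acos u.
have cos_th : cos th = u by rewrite acosK // in_itv.
have sin_th : sin th = `|y| / r.
  rewrite sin_acos // -(ger0_norm (ltW r_gt0)) -normf_div -sqrtr_sqr.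
  by congr Num.sqrt; rewrite expr_div_n r2 /u expr_div_n r2 /s; field.
have th_ge0 : 0 <= th := acos_ge0 u_itv.
have th_le_pi : th <= pi := acos_lepi u_itv.
have pi_gt0 := @pi_gt0 R.
have [y_ge0|y_lt0] := lerP 0 y.
  exists r, th; split; [exact: ltW | lra |].
  rewrite /polar cos_th sin_th ger0_norm // -x_eq.
  by congr pair; field; exact: lt0r_neq0.
have th_gt0 : 0 < th.
  have sin_gt0 : 0 < sin th by rewrite sin_th divr_gt0 ?normr_gt0 ?lt_eqF.
  rewrite lt_neqAle th_ge0 andbT; apply: contraTneq sin_gt0 => <-.
  by rewrite sin0 ltxx.
exists r, (2 * pi - th); split; [exact: ltW | lra |].
rewrite /polar cosB sinB [2 * pi]mulr_natl cos2pi sin2pi cos_th sin_th.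
rewrite ltr0_norm //; congr pair; first by rewrite x_eq; ring.
by field; exact: lt0r_neq0.
Qed.

End PolarCoordinates.

Section EvenPeriodicProfile.
Context {R : realType} {g : R -> R} {h : R}.
Hypothesis gper : forall x, g (x + 2 * h) = g x.
Hypothesis geven : forall x, g (- x) = g x.
Hypothesis gmono : forall x y : R, 0 <= x -> x <= y -> y <= h -> g x <= g y.

Lemma g_symm x : g (2 * h - x) = g x.
Proof. by rewrite addrC gper geven. Qed.

Lemma g_perB x : g (x - 2 * h) = g x.
Proof. by rewrite -[in RHS](subrK (2 * h) x) gper. Qed.

Lemma g_perMn (k : nat) x : g (x + k%:R * (2 * h)) = g x.
Proof.
elim: k => [|k IHk]; first by rewrite mul0r addr0.
by rewrite -addn1 natrD mulrDl mul1r addrA gper.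
Qed.

Lemma g_le_refl t th : 0 < t < h -> h + t < th < 2 * h + t ->
  g th <= g (2 * (h + t) - th).
Proof.
move=> t_itv th_itv.
have [th_le|th_gt] := lerP th (2 * h).
- rewrite -(g_symm th).
  have [th'_le|th'_gt] := lerP (2 * (h + t) - th) h; first by apply: gmono; lra.
  by rewrite -(g_symm (2 * (h + t) - th)); apply: gmono; lra.
- rewrite -(g_perB th).
  have [th'_le|th'_gt] := lerP (2 * (h + t) - th) h; first by apply: gmono; lra.
  by rewrite -(g_symm (2 * (h + t) - th)); apply: gmono; lra.
Qed.

Lemma g_const_of_eq : 0 < h -> g 0 = g h -> forall x, 0 <= x -> g x = g 0.
Proof.
move=> h_gt0 g0h x x_ge0.
have g_half_period y : 0 <= y <= h -> g y = g 0.
  move=> /andP[y_ge0 y_le]; apply/eqP; rewrite eq_le.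
  by apply/andP; split; [rewrite g0h |]; apply: gmono.
set k := Num.truncn (x / (2 * h)).
have /andP[k_le k_gt] : k%:R <= x / (2 * h) < k.+1%:R.
  by apply: truncn_itv; apply: divr_ge0 => //; lra.
rewrite ler_pdivlMr ?mulr_gt0 // in k_le.
rewrite ltr_pdivrMr ?mulr_gt0 // -addn1 natrD mulrDl mul1r in k_gt.
rewrite -(subrK (k%:R * (2 * h)) x) g_perMn.
have [y_le|y_gt] := lerP (x - k%:R * (2 * h)) h.
  by apply: g_half_period; lra.
by rewrite -g_symm; apply: g_half_period; lra.
Qed.

Hypothesis gcont : continuous g.

Lemma g_level_end : 0 <= h -> g 0 < g h ->
  exists2 c : R, 0 <= c < h & g c = g 0 /\ forall x, c < x < 2 * h - c -> g 0 < g x.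
Proof.
move=> h_ge0 g0h.
pose E := [set x : R | 0 <= x] `&` [set x | x <= h] `&` g @^-1` [set g 0].
have E0 : E 0 by rewrite /E /=; split; first split; rewrite ?lexx.
have E_ub : ubound E h by move=> x [[]].
have E_closed : closed E.
  apply: closedI; first by apply: closedI; [exact: closed_ge | exact: closed_le].
  by apply: preimage_closed; [move=> x _; exact: gcont | exact: closed_eq].
have [[c_ge0 c_le] gc] : E (sup E).
  by apply: E_closed; apply: closure_sup; [exists 0 | exists h].
set c := sup E in c_ge0 c_le gc; rewrite /= in c_ge0 c_le gc.
have above x : c < x <= h -> g 0 < g x.
  move=> x_itv; rewrite lt_def andbC; apply/andP; split.
    by apply: gmono; lra.
  apply/eqP => gx0; suff : x <= c by lra.
  apply: sup_upper_bound; first by split; [exists 0 | exists h].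
  by rewrite /E /=; split=> //; split; lra.
have c_lt : c < h.
  by rewrite lt_neqAle c_le andbT; apply: contraTneq g0h => <-; rewrite gc ltxx.
exists c; first lra.
split=> // x /andP[cx x_lt].
have [x_le|x_gt] := lerP x h; first by apply: above; lra.
by rewrite -(g_symm x); apply: above; lra.
Qed.

Lemma exists_g_lt_refl t : 0 < t < h -> g 0 < g h ->
  exists2 th, h + t < th < 2 * h + t & g th < g (2 * (h + t) - th).
Proof.
move=> t_itv g0h; have h_ge0 : 0 <= h by lra.
have [c c_itv [gc above]] := g_level_end h_ge0 g0h.
have [c_lt|c_ge] := ltrP c (h - t).
  exists (2 * h - c); first lra.
  by rewrite g_symm gc; apply: above; lra.
have [c_lt'|c_ge'] := ltrP c t.
  exists (2 * h + c); first lra.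
  by rewrite addrC gper gc; apply: above; lra.
exists (h + 2 * t); first lra.
rewrite (_ : 2 * (h + t) - (h + 2 * t) = h); last by ring.
apply: le_lt_trans g0h; rewrite -gc.
have [t2_le|t2_gt] := lerP (2 * t) h.
  by rewrite -g_symm; apply: gmono; lra.
by rewrite -g_perB; apply: gmono; lra.
Qed.

End EvenPeriodicProfile.

Section StarShapedDomain.
Context {R : realType} {g : R -> R}.

Lemma starD_sector_polar {a b : R} {p} : 0 <= a -> b <= 2 * pi ->
  (starD g `&` sector a b) p ->
  exists r th, [/\ 0 < r, a < th < b, r < g th & p = polar r th].
Proof.
move=> a_ge0 b_le [[r' [th' [th'_itv /andP[r'_ge0 r'_lt] ->]]]].
move=> [r [th [r_gt0 th_itv E]]].
have th_itv' : 0 <= th < 2 * pi by lra.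
have [er et] := polar_inj r_gt0 r'_ge0 th_itv' th'_itv (esym E).
by subst r' th'; exists r, th.
Qed.

Lemma bdry_starD_polar th : 0 <= th < 2 * pi -> 0 < g th ->
  bdry (starD g) (polar (g th) th).
Proof.
move=> th_itv gth_gt0; split.
  move=> B /nbhs_ballP[e /= e_gt0 eB].
  set d := Num.min (e / 2) (g th / 2).
  have d_gt0 : 0 < d by rewrite lt_min; apply/andP; split; lra.
  have d_lt : d < e /\ d < g th by rewrite !gt_min; split; apply/orP; left + right; lra.
  exists (polar (g th - d) th); split.
    by exists (g th - d), th; split => //; apply/andP; split; lra.
  apply: eB; rewrite /ball /= /prod_ball /polar /=; split; rewrite -ball_normE /=.
  - rewrite -mulrBl (_ : g th - (g th - d) = d); last by ring.
    by rewrite normrM (gtr0_norm d_gt0); have := cos_max th; nra.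
  - rewrite -mulrBl (_ : g th - (g th - d) = d); last by ring.
    by rewrite normrM (gtr0_norm d_gt0); have := sin_max th; nra.
move=> /interior_subset[r [th' [th'_itv /andP[r_ge0 r_lt] E]]].
have [er et] := polar_inj gth_gt0 r_ge0 th_itv th'_itv E.
by move: r_lt; rewrite -er -et ltxx.
Qed.

Lemma starD_disk : 0 < g 0 -> (forall x, 0 <= x -> g x = g 0) ->
  starD g = disk (0, 0) (g 0).
Proof.
move=> g0_gt0 g_const; apply/seteqP; split=> p.
  move=> [r [th [/andP[th_ge0 _] /andP[r_ge0 r_lt] ->]]].
  by rewrite /disk /= !subr0 polar_normsq -(g_const th) //; nra.
have [r [th [r_ge0 th_itv ->]]] := polarP p.
rewrite /disk /= !subr0 polar_normsq => r_lt.
exists r, th; split=> //; rewrite r_ge0 g_const /=; [nra | lra].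
Qed.

End StarShapedDomain.

Section ReflectionAcrossMidRay.
Context {R : realType} {g : R -> R} {h t : R}.
Hypothesis gper : forall x, g (x + 2 * h) = g x.
Hypothesis geven : forall x, g (- x) = g x.
Hypothesis gmono : forall x y : R, 0 <= x -> x <= y -> y <= h -> g x <= g y.

Lemma refl_starD_sector : 0 < t < h -> 2 * h <= pi ->
  refl (h + t) @` (starD g `&` sector (h + t) (2 * h + t))
    `<=` starD g `&` sector t (h + t).
Proof.
move=> t_itv h_le _ [p Dp <-]; have pi_gt0 := @pi_gt0 R.
have ht_ge0 : 0 <= h + t by lra.
have sector_le : 2 * h + t <= 2 * pi by lra.
have [r [th [r_gt0 th_itv r_lt ->]]] := starD_sector_polar ht_ge0 sector_le Dp.
have r_lt' := lt_le_trans r_lt (g_le_refl gper geven gmono _ _ t_itv th_itv).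
rewrite refl_polar; split; exists r, (2 * (h + t) - th).
  by split=> //; apply/andP; split; lra.
by split=> //; lra.
Qed.

Hypothesis gpos : forall x, 0 < g x.
Hypothesis gcont : continuous g.

Lemma refl_bdry_starD_meet : 0 < t < h -> 2 * h <= pi ->
  (~ exists c rho, 0 < rho /\ starD g = disk c rho) ->
  refl (h + t) @` (bdry (starD g) `&` sector (h + t) (2 * h + t))
    `&` starD g !=set0.
Proof.
move=> t_itv h_le not_disk; have pi_gt0 := @pi_gt0 R.
have g0_lt : g 0 < g h.
  have g0_le : g 0 <= g h by apply: gmono; lra.
  rewrite lt_neqAle g0_le andbT.
  apply/eqP => g0h; apply: not_disk; exists (0, 0), (g 0); split=> //.
  by apply: starD_disk => //; apply: g_const_of_eq => //; lra.
have [th th_itv lt_refl] := exists_g_lt_refl gper geven gmono gcont _ t_itv g0_lt.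
exists (polar (g th) (2 * (h + t) - th)); split.
  exists (polar (g th) th); last exact: refl_polar.
  by split; [apply: bdry_starD_polar; [lra | exact: gpos] | exists (g th), th].
by exists (g th), (2 * (h + t) - th); split=> //; [lra | rewrite (ltW (gpos _))].
Qed.

End ReflectionAcrossMidRay.

Theorem lemma2 (R : realType) (n : nat) (g : R -> R)
  (hn : (2 <= n)%N)
  (gpos : forall x, 0 < g x)
  (gcont : continuous g)
  (geven : forall x, g (- x) = g x)
  (gper : forall x, g (x + 2 * pi / n%:R) = g x)
  (gmono : forall x y, 0 <= x -> x <= y -> y <= pi / n%:R -> g x <= g y)
  (t : R) (ht0 : 0 < t) (ht1 : t < pi / n%:R) :
  refl (pi / n%:R + t) @`
      (starD g `&` sector (pi / n%:R + t) (2 * pi / n%:R + t))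
    `<=` starD g `&` sector t (pi / n%:R + t)
  /\
  ((~ exists (c : R * R) (rho : R), 0 < rho /\ starD g = disk c rho) ->
   refl (pi / n%:R + t) @`
      (bdry (starD g) `&` sector (pi / n%:R + t) (2 * pi / n%:R + t))
    `&` starD g !=set0).
Proof.
have mulrA2 : 2 * pi / n%:R = 2 * (pi / n%:R) :> R by rewrite mulrA.
rewrite mulrA2 in gper *; set h := pi / n%:R in gper gmono ht1 *.
have t_itv : 0 < t < h by rewrite ht0.
have n_ge2 : (2 : R) <= n%:R by rewrite ler_nat.
have h_le : 2 * h <= pi.
  by rewrite /h mulrA ler_pdivrMr; [have := @pi_gt0 R; nra | lra].
split; first exact: refl_starD_sector.
exact: refl_bdry_starD_meet.
Qed.
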